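(* Let $\Sigma$ be a set of constant symbols with $\star\notin\Sigma$ and $O\in\mathrm{Matr}_\Sigma(\mathcal O)$ an observation. Then $\mathcal L(O)=\{W\in\Sigma^*:\ \text{there exists a tuple }p\text{ of pairwise distinct constants of }\mathbf P\text{ (of length }|W|+1)\text{ such that }O\bar W_p\text{ is nilpotent}\}$.
   Context: Terms: first-order terms built from an infinite set of variables, a binary function symbol $\bullet$ written infix (not associative; by convention right-associating, $t\bullet u\bullet v:=t\bullet(u\bullet v)$), infinitely many constant symbols including a distinguished constant $\star$, and for each $n\ge1$ at least one $n$-ary function symbol. $\mathrm{var}(t)$ is the set of variables of $t$. The height of an occurrence of a variable in $t$ is its distance from the root of the tree of $t$. A renaming is a bijective substitution mapping variables to variables. A flow is a pair of terms written $t\leftarrow u$ with $\mathrm{var}(t)\subseteq\mathrm{var}(u)$, considered up to renaming. The product of flows $u\leftarrow v$ and $t\leftarrow w$ (representatives chosen with disjoint variable sets) is defined iff $v$ and $t$ are unifiable, and then equals $u\theta\leftarrow w\theta$ with $\theta$ a most general unifier of $v,t$. A wiring is a finite set of flows, written as a formal sum, with $0$ the empty wiring; product $FG=\{fg: f\in F,g\in G, fg\text{ defined}\}$, $F^n$ the $n$-fold product. $F$ is nilpotent if $F^n=0$ for some $n\in\mathbb N$. A flow $t\leftarrow u$ is balanced if for every variable $x$, all occurrences of $x$ in $t$ and in $u$ have the same height; $\mathcal B$ is the set of wirings all of whose flows are balanced. A semiring is a set of wirings containing $0$ and closed under finite sums (unions) and products. Tensor product of flows (variables renamed apart): $(u\leftarrow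 v)\otimes(t\leftarrow w):=u\bullet t\leftarrow v\bullet w$; extended to wirings by $(\sum_i f_i)\otimes(\sum_j g_j)=\sum_{i,j}f_i\otimes g_j$, and to semirings by $\mathcal A\otimes\mathcal B=\{\sum_i F_i\otimes G_i: F_i\in\mathcal A,G_i\in\mathcal B\}$, right-associating. For a set $E$ of closed terms, $\mathcal C(E)=\{\sum_i t_i\leftarrow u_i: t_i,u_i\in E\}$. For a set of symbols $\mathbf S$ and semiring $\mathcal A$, $\mathcal R_{\mathbf S}(\mathcal A)$ is the set of wirings of $\mathcal A$ not using symbols of $\mathbf S$. Fix disjoint infinite sets of constants $\mathbf P$ (position constants) and $\mathbf S$ (states), a unary function symbol $\mathrm M$, and constants $\mathrm L,\mathrm R$. The observation semiring is $\mathcal O:=\mathcal C(\mathbf S)\otimes\mathcal R_{\mathbf P}(\mathcal B)$. For a set of constants $\Sigma$ and semiring $\mathcal A$, $\mathrm{Matr}_\Sigma(\mathcal A):=\mathcal C(\Sigma\cup\{\star\})\otimes\mathcal C(\{\mathrm L,\mathrm R\})\otimes\mathcal A$. An observation over $\Sigma$ is any element of $\mathrm{Matr}_\Sigma(\mathcal O)$. Word representation: write $t\rightleftarrows u$ for $t\leftarrow u+u\leftarrow t$. For $W=c_1\cdots c_n$ over $\Sigma$ and pairwise distinct $p=(p_0,\dots,p_n)\in\mathbf P^{n+1}$, set $p_{n+1}=p_0$, $c_0=c_{n+1}=\star$, and, with $x,y$ variables, $\bar W_p=\sum_{i=0}^n\big(c_i\bullet\mathrm L\bullet x\bullet y\bullet\mathrm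 M(p_i)\ \rightleftarrows\ c_{i+1}\bullet\mathrm R\bullet x\bullet y\bullet\mathrm M(p_{i+1})\big)$. The language of $O$ is defined as $\mathcal L(O)=\{W\in\Sigma^*:\ O\bar W_p\text{ is nilpotent for every tuple }p\text{ of pairwise distinct constants of }\mathbf P\text{ of length }|W|+1\}$. *)

From Stdlib Require Import List Arith.
Import ListNotations.

(* Constants: the distinguished star, L, R, position constants P (CP n),
   states S (CS n), and infinitely many other constants (CO n). *)
Inductive const : Type :=
  | Star | CL | CR | CP (n : nat) | CS (n : nat) | CO (n : nat).

(* Terms: variables (nat), constants, the binary symbol "•" (Dot),
   and function symbols: Fn f args is the symbol (f, length args) applied
   to args, so there are infinitely many function symbols of each arity. *)
Inductive term : Type :=
  | Var (x : nat)
  | Cst (c : const)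
  | Dot (t u : term)
  | Fn (f : nat) (args : list term).

Definition M (t : term) : term := Fn 0 [t].

Fixpoint occ (x : nat) (t : term) (h : nat) {struct t} : Prop :=
  match t with
  | Var y => y = x /\ h = 0
  | Cst _ => False
  | Dot a b => match h with 0 => False | S h' => occ x a h' \/ occ x b h' end
  | Fn _ l => match h with
              | 0 => False
              | S h' => (fix occl (l : list term) : Prop :=
                           match l with
                           | [] => False
                           | a :: l' => occ x a h' \/ occl l'
                           end) l
              end
  end.

Definition var_in (x : nat) (t : term) : Prop := exists h, occ x t h.

Fixpoint usesP (t : term) : Prop :=
  match t with
  | Var _ => False
  | Cst (CP _) => True
  | Cst _ => False
  | Dot a b => usesP a \/ usesP b
  | Fn _ l => (fix usl (l : list term) : Prop :=
                 match l with [] => False | a :: l' => usesP a \/ usl l' end) l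
  end.

Fixpoint subst (th : nat -> term) (t : term) : term :=
  match t with
  | Var x => th x
  | Cst c => Cst c
  | Dot a b => Dot (subst th a) (subst th b)
  | Fn f l => Fn f (map (subst th) l)
  end.

Definition rename (s : nat -> nat) (t : term) : term := subst (fun x => Var (s x)) t.

Definition is_renaming (s : nat -> nat) : Prop :=
  exists r : nat -> nat, (forall x, r (s x) = x) /\ (forall x, s (r x) = x).

Definition unifier (th : nat -> term) (a b : term) : Prop := subst th a = subst th b.

Definition mgu (th : nat -> term) (a b : term) : Prop :=
  unifier th a b /\
  forall th', unifier th' a b -> exists eta, forall x, subst eta (th x) = th' x.

(* A flow t <- u is represented by the pair (t, u). *)
Definition flow := (term * term)%type.

Definition wf_flow (f : flow) : Prop := forall x, var_in x (fst f) -> var_in x (snd f).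

Definition flow_ren (f h : flow) : Prop :=
  exists s, is_renaming s /\ h = (rename s (fst f), rename s (snd f)).

(* h is (a representative of) the product (u <- v)(t <- w) *)
Definition flow_prod (f g h : flow) : Prop :=
  exists s1 s2, is_renaming s1 /\ is_renaming s2 /\
    (forall x, (var_in x (rename s1 (fst f)) \/ var_in x (rename s1 (snd f))) ->
               ~ (var_in x (rename s2 (fst g)) \/ var_in x (rename s2 (snd g)))) /\
    exists th, mgu th (rename s1 (snd f)) (rename s2 (fst g)) /\
      flow_ren (subst th (rename s1 (fst f)), subst th (rename s2 (snd g))) h.

Definition balanced (f : flow) : Prop :=
  forall x h1 h2,
    (occ x (fst f) h1 \/ occ x (snd f) h1) ->
    (occ x (fst f) h2 \/ occ x (snd f) h2) -> h1 = h2.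

(* A wiring is a finite set of flows (up to renaming), given by a list of
   representatives.  For products/powers we use the induced set of flows
   (a predicate closed under renaming). *)
Definition wiring := list flow.
Definition wset := flow -> Prop.

Definition of_list (F : wiring) : wset := fun h => exists f, In f F /\ flow_ren f h.

Definition wprod (A B : wset) : wset :=
  fun h => exists f g, A f /\ B g /\ flow_prod f g h.

(* wpow A n = A^(n+1) *)
Fixpoint wpow (A : wset) (n : nat) : wset :=
  match n with
  | 0 => A
  | S n' => wprod A (wpow A n')
  end.

Definition nilpotent (A : wset) : Prop := exists n, forall h, ~ wpow A n h.

Definition weq (F G : wiring) : Prop := forall h, of_list F h <-> of_list G h.

Definition is_wiring (F : wiring) : Prop := forall f, In f F -> wf_flow f.

Definition semiring := wiring -> Prop.

Definition tensor_flow (f g : flow) : flow :=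
  (Dot (rename (fun x => 2 * x) (fst f)) (rename (fun x => S (2 * x)) (fst g)),
   Dot (rename (fun x => 2 * x) (snd f)) (rename (fun x => S (2 * x)) (snd g))).

Definition tensorW (F G : wiring) : wiring :=
  concat (map (fun f => map (tensor_flow f) G) F).

Definition tensorS (A B : semiring) : semiring :=
  fun H => exists ps : list (wiring * wiring),
      (forall p, In p ps -> A (fst p) /\ B (snd p)) /\
      weq H (concat (map (fun p => tensorW (fst p) (snd p)) ps)).

Definition Csr (E : term -> Prop) : semiring :=
  fun H => forall f, In f H -> E (fst f) /\ E (snd f).

Definition Bal : semiring :=
  fun H => is_wiring H /\ forall f, In f H -> balanced f.

Definition RP (A : semiring) : semiring :=
  fun H => A H /\ forall f, In f H -> ~ usesP (fst f) /\ ~ usesP (snd f).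

Definition isState (t : term) : Prop := exists n, t = Cst (CS n).

Definition Obs : semiring := tensorS (Csr isState) (RP Bal).

Definition Matr (Sigma : const -> Prop) (A : semiring) : semiring :=
  tensorS (Csr (fun t => exists c, t = Cst c /\ (Sigma c \/ c = Star)))
          (tensorS (Csr (fun t => t = Cst CL \/ t = Cst CR)) A).

(* c_i for i = 0..n+1 : c_0 = c_{n+1} = ⋆ *)
Definition letter (W : list const) (i : nat) : const :=
  if i =? 0 then Star
  else if i =? S (length W) then Star
  else nth (i - 1) W Star.

(* p_i, with p_{n+1} = p_0; position constants are CP k, ps lists the k's *)
Definition pos (ps : list nat) (i : nat) : nat := nth (i mod (length ps)) ps 0.

Definition side (c lr : const) (pk : nat) : term :=
  Dot (Cst c) (Dot (Cst lr) (Dot (Var 0) (Dot (Var 1) (M (Cst (CP pk)))))).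

Definition Wbar (W : list const) (ps : list nat) : wiring :=
  concat (map (fun i =>
     let a := side (letter W i) CL (pos ps i) in
     let b := side (letter W (S i)) CR (pos ps (S i)) in
     [(a, b); (b, a)]) (seq 0 (S (length W)))).

Definition word_over (Sigma : const -> Prop) (W : list const) : Prop :=
  forall c, In c W -> Sigma c.

Definition inL (Sigma : const -> Prop) (O : wiring) (W : list const) : Prop :=
  word_over Sigma W /\
  forall ps : list nat, length ps = S (length W) -> NoDup ps ->
    nilpotent (wprod (of_list O) (of_list (Wbar W ps))).

(* Nilpotency of O W_p does not depend on the injective tuple p.  Any
   permutation sigma of the position constants carrying p to p' can be applied
   below the head symbol of every term.  This commutes with substitution, hence
   with most general unifiers and with products of flows; it fixes the flows of
   O, whose bodies contain no position constant, and sends W_p to W_p'.  So it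
   maps every power of O W_p into the corresponding power of O W_p'.  The head
   symbol is left alone because Sigma may itself contain position constants. *)
From Stdlib Require Import List Arith Lia FinFun.
Import ListNotations.

Fixpoint term_ind_nested (P : term -> Prop) (Hv : forall x, P (Var x))
  (Hc : forall c, P (Cst c)) (Hd : forall a b, P a -> P b -> P (Dot a b))
  (Hf : forall f l, Forall P l -> P (Fn f l)) (t : term) {struct t} : P t :=
  match t with
  | Var x => Hv x
  | Cst c => Hc c
  | Dot a b => Hd a b (term_ind_nested P Hv Hc Hd Hf a)
                      (term_ind_nested P Hv Hc Hd Hf b)
  | Fn f l => Hf f l ((fix go (l : list term) : Forall P l :=
                        match l with
                        | [] => Forall_nil P
                        | a :: l' => Forall_cons a (term_ind_nested P Hv Hc Hd Hf a) (go l')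
                        end) l)
  end.

Lemma map_ext_id_in {A} (g : A -> A) (l : list A) :
  (forall a, In a l -> g a = a) -> map g l = l.
Proof. intro H. rewrite <- (map_id l) at 2. apply map_ext_in. exact H. Qed.

Lemma usesP_Fn f l : usesP (Fn f l) <-> exists a, In a l /\ usesP a.
Proof.
  induction l as [|b l IH]; simpl.
  - split; [tauto | intros [a [[] _]]].
  - simpl in IH. rewrite IH. split.
    + intros [H | [a [Ha Hu]]]; eauto.
    + intros [a [[<- | Ha] Hu]]; eauto.
Qed.

Lemma occ_Fn x f l h : occ x (Fn f l) (S h) <-> exists a, In a l /\ occ x a h.
Proof.
  induction l as [|b l IH]; simpl.
  - split; [tauto | intros [a [[] _]]].
  - simpl in IH. rewrite IH. split.
    + intros [H | [a [Ha Ho]]]; eauto.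
    + intros [a [[<- | Ha] Ho]]; eauto.
Qed.

Lemma rename_id t : rename (fun x => x) t = t.
Proof.
  unfold rename. induction t using term_ind_nested; simpl; f_equal; auto.
  rewrite Forall_forall in H. apply map_ext_id_in. exact H.
Qed.

Lemma usesP_rename r t : usesP (rename r t) <-> usesP t.
Proof.
  unfold rename. induction t using term_ind_nested; simpl; try tauto.
  change (usesP (Fn f (map (subst (fun x => Var (r x))) l)) <-> usesP (Fn f l)).
  rewrite !usesP_Fn, Forall_forall in *. split.
  - intros [a [Ha Hu]]. apply in_map_iff in Ha as [b [<- Hb]].
    exists b. split; [exact Hb | apply H; assumption].
  - intros [a [Ha Hu]]. exists (subst (fun x => Var (r x)) a).
    split; [apply in_map; assumption | apply H; assumption].
Qed.

Fixpoint rename_pos (s : nat -> nat) (t : term) : term :=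
  match t with
  | Var x => Var x
  | Cst (CP n) => Cst (CP (s n))
  | Cst c => Cst c
  | Dot a b => Dot (rename_pos s a) (rename_pos s b)
  | Fn f l => Fn f (map (rename_pos s) l)
  end.

Lemma rename_pos_subst s th t :
  rename_pos s (subst th t) = subst (fun x => rename_pos s (th x)) (rename_pos s t).
Proof.
  induction t using term_ind_nested; simpl; f_equal; auto.
  - destruct c; reflexivity.
  - rewrite !map_map, Forall_forall in *. apply map_ext_in. auto.
Qed.

Lemma rename_posK s s' t : (forall n, s' (s n) = n) -> rename_pos s' (rename_pos s t) = t.
Proof.
  intro Hs. induction t using term_ind_nested; simpl; f_equal; auto.
  - destruct c; simpl; rewrite ?Hs; reflexivity.
  - rewrite map_map, Forall_forall in *. apply map_ext_id_in. exact H.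
Qed.

Lemma rename_pos_id s t : ~ usesP t -> rename_pos s t = t.
Proof.
  induction t using term_ind_nested; simpl; intro Hn; auto.
  - destruct c; simpl in *; tauto.
  - f_equal; [apply IHt1 | apply IHt2]; tauto.
  - f_equal. rewrite Forall_forall in H. apply map_ext_id_in. intros a Ha.
    apply H; [exact Ha |]. intro Hu. apply Hn. apply (proj2 (usesP_Fn f l)). eauto.
Qed.

Lemma occ_rename_pos s x t h : occ x (rename_pos s t) h <-> occ x t h.
Proof.
  revert h. induction t using term_ind_nested; intro h; simpl; try tauto.
  - destruct c; simpl; tauto.
  - destruct h; [tauto |]. rewrite IHt1, IHt2. tauto.
  - destruct h; [simpl; tauto |].
    change (occ x (Fn f (map (rename_pos s) l)) (S h) <-> occ x (Fn f l) (S h)).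
    rewrite !occ_Fn, Forall_forall in *. split.
    + intros [a [Ha Ho]]. apply in_map_iff in Ha as [b [<- Hb]].
      exists b. split; [exact Hb | apply H; assumption].
    + intros [a [Ha Ho]]. exists (rename_pos s a).
      split; [apply in_map; assumption | apply H; assumption].
Qed.

(** * Renaming position constants below the head *)

Definition headed (t : term) : Prop := exists c r, t = Dot (Cst c) r.
Definition headed_flow (f : flow) : Prop := headed (fst f) /\ headed (snd f).

Definition rename_body (s : nat -> nat) (t : term) : term :=
  match t with Dot a b => Dot a (rename_pos s b) | _ => t end.

Definition rename_body_flow (s : nat -> nat) (f : flow) : flow :=
  (rename_body s (fst f), rename_body s (snd f)).

Lemma var_in_rename_body s x t : var_in x (rename_body s t) <-> var_in x t.
Proof.
  unfold var_in. destruct t; simpl; try tauto.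
  split; intros [[|h] Ho]; try contradiction; exists (S h); simpl in *;
    rewrite occ_rename_pos in *; exact Ho.
Qed.

Lemma rename_body_rename s r t : rename_body s (rename r t) = rename r (rename_body s t).
Proof. destruct t; unfold rename; simpl; f_equal; apply rename_pos_subst. Qed.

Lemma headed_subst th t : headed t -> headed (subst th t).
Proof. intros [c [r ->]]. exists c, (subst th r). reflexivity. Qed.

Lemma headed_rename r t : headed t -> headed (rename r t).
Proof. apply headed_subst. Qed.

Lemma rename_body_subst s th t : headed t ->
  rename_body s (subst th t) = subst (fun x => rename_pos s (th x)) (rename_body s t).
Proof. intros [c [r ->]]. simpl. f_equal. apply rename_pos_subst. Qed.

Definition maps_into (s : nat -> nat) (A B : wset) : Prop :=
  forall f, A f -> headed_flow f /\ B (rename_body_flow s f).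

Section InvertibleBodyRenaming.

Variables s s' : nat -> nat.
Hypothesis s'K : forall n, s' (s n) = n.
Hypothesis sK : forall n, s (s' n) = n.

(* A unifier of the renamed terms is pulled back by renaming with s'. *)
Lemma mgu_rename_body th a b : headed a -> headed b -> mgu th a b ->
  mgu (fun x => rename_pos s (th x)) (rename_body s a) (rename_body s b).
Proof.
  intros [c [ra ->]] [d [rb ->]] [Hu Hg]. unfold unifier in *. simpl in *.
  injection Hu as <- Hr. split; unfold unifier; simpl.
  - rewrite <- !rename_pos_subst. congruence.
  - intros th' Hu'. injection Hu' as Hr'.
    destruct (Hg (fun x => rename_pos s' (th' x))) as [eta Heta].
    + simpl. f_equal. apply (f_equal (rename_pos s')) in Hr'.
      rewrite !rename_pos_subst, !rename_posK in Hr' by assumption. exact Hr'.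
    + exists (fun y => rename_pos s (eta y)). intro x.
      rewrite <- rename_pos_subst, Heta. apply rename_posK. exact sK.
Qed.

Lemma flow_prod_rename_body f g h :
  headed_flow f -> headed_flow g -> flow_prod f g h ->
  headed_flow h /\
  flow_prod (rename_body_flow s f) (rename_body_flow s g) (rename_body_flow s h).
Proof.
  intros [Hf1 Hf2] [Hg1 Hg2] [s1 [s2 [Hs1 [Hs2 [Hd [th [Hm [r [Hr ->]]]]]]]]].
  split.
  - split; simpl; apply headed_rename, headed_subst, headed_rename; assumption.
  - exists s1, s2. do 2 (split; [assumption |]). split.
    + simpl. rewrite <- !rename_body_rename. setoid_rewrite var_in_rename_body. exact Hd.
    + exists (fun x => rename_pos s (th x)). split.
      * simpl. rewrite <- !rename_body_rename.
        apply mgu_rename_body; try apply headed_rename; assumption.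
      * exists r. split; [assumption |]. unfold rename_body_flow. simpl.
        rewrite !rename_body_rename, !rename_body_subst by (apply headed_rename; assumption).
        rewrite !rename_body_rename. reflexivity.
Qed.

Lemma maps_into_wprod A B C D :
  maps_into s A B -> maps_into s C D -> maps_into s (wprod A C) (wprod B D).
Proof.
  intros HAB HCD h [f [g [Hf [Hg Hp]]]].
  destruct (HAB f Hf) as [hf Bf], (HCD g Hg) as [hg Dg].
  destruct (flow_prod_rename_body f g h hf hg Hp) as [hh Hp'].
  split; [exact hh |]. exists (rename_body_flow s f), (rename_body_flow s g). auto.
Qed.

Lemma maps_into_wpow A B n : maps_into s A B -> maps_into s (wpow A n) (wpow B n).
Proof. intro H. induction n; simpl; [exact H | apply maps_into_wprod; assumption]. Qed.

Lemma nilpotent_maps_into A B : maps_into s A B -> nilpotent B -> nilpotent A.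
Proof.
  intros H [n Hn]. exists n. intros h Hh.
  apply (Hn (rename_body_flow s h)), (maps_into_wpow A B n H). exact Hh.
Qed.

End InvertibleBodyRenaming.

(** * A permutation of [nat] carrying one injective list to another *)

Definition transp (a b x : nat) : nat :=
  if Nat.eqb x a then b else if Nat.eqb x b then a else x.

Lemma transpK a b x : transp a b (transp a b x) = x.
Proof.
  unfold transp.
  destruct (Nat.eqb_spec x a) as [-> | Hxa].
  - rewrite Nat.eqb_refl. destruct (Nat.eqb_spec b a); congruence.
  - destruct (Nat.eqb_spec x b) as [-> | Hxb].
    + rewrite Nat.eqb_refl. reflexivity.
    + destruct (Nat.eqb_spec x a), (Nat.eqb_spec x b); congruence.
Qed.

Lemma transp_inj a b : Injective (transp a b).
Proof. intros x y Hxy. rewrite <- (transpK a b x), Hxy. apply transpK. Qed.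

Fixpoint perm_of (q p : list nat) : nat -> nat :=
  match q, p with
  | a :: q', b :: p' => fun x => transp a b (perm_of q' (map (transp a b) p') x)
  | _, _ => fun x => x
  end.

Fixpoint perm_of_inv (q p : list nat) : nat -> nat :=
  match q, p with
  | a :: q', b :: p' => fun x => perm_of_inv q' (map (transp a b) p') (transp a b x)
  | _, _ => fun x => x
  end.

Lemma perm_ofK q : forall p x, perm_of_inv q p (perm_of q p x) = x.
Proof. induction q; destruct p; simpl; auto. intro. rewrite transpK. apply IHq. Qed.

Lemma perm_of_invK q : forall p x, perm_of q p (perm_of_inv q p x) = x.
Proof. induction q; destruct p; simpl; auto. intro. rewrite IHq. apply transpK. Qed.

Lemma perm_of_notin q : forall p x, ~ In x q -> ~ In x p -> perm_of q p x = x.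
Proof.
  induction q as [|a q IH]; destruct p as [|b p]; simpl; auto. intros x Hq Hp.
  assert (Hx : transp a b x = x).
  { unfold transp. destruct (Nat.eqb_spec x a), (Nat.eqb_spec x b); subst; tauto || reflexivity. }
  assert (Hmap : ~ In x (map (transp a b) p)).
  { rewrite <- Hx at 1. intro Hin. apply in_map_iff in Hin as [y [Hy Hin]].
    apply transp_inj in Hy. subst. tauto. }
  rewrite IH by tauto. exact Hx.
Qed.

Lemma map_perm_of q : forall p, NoDup q -> NoDup p -> length q = length p ->
  map (perm_of q p) q = p.
Proof.
  induction q as [|a q IH]; destruct p as [|b p]; simpl; try discriminate; auto.
  intros Hq Hp Hl. apply NoDup_cons_iff in Hq as [Ha Hq], Hp as [Hb Hp]. f_equal.
  - rewrite perm_of_notin; [unfold transp; rewrite Nat.eqb_refl; reflexivity | exact Ha |].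
    intro Hin. apply in_map_iff in Hin as [y [Hy Hin]].
    apply (f_equal (transp a b)) in Hy. rewrite transpK in Hy.
    unfold transp in Hy. rewrite Nat.eqb_refl in Hy. subst. contradiction.
  - rewrite <- (map_map (perm_of q (map (transp a b) p)) (transp a b)), IH.
    + rewrite map_map. apply map_ext_id_in. intros. apply transpK.
    + exact Hq.
    + apply Injective_map_NoDup; [apply transp_inj | exact Hp].
    + rewrite length_map. lia.
Qed.

Lemma headed_side c lr k : headed (side c lr k).
Proof. eexists; eexists; reflexivity. Qed.

Lemma pos_map s q i : 0 < length q -> s (pos q i) = pos (map s q) i.
Proof.
  intro Hl. unfold pos. rewrite length_map.
  assert (Hi : i mod length q < length q) by (apply Nat.mod_upper_bound; lia).
  rewrite (nth_indep (map s q) 0 (s 0)) by (rewrite length_map; exact Hi).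
  rewrite map_nth. reflexivity.
Qed.

Lemma map_rename_body_Wbar s W q : length q = S (length W) ->
  map (rename_body_flow s) (Wbar W q) = Wbar W (map s q).
Proof.
  intro Hl. unfold Wbar. rewrite concat_map, map_map. f_equal. apply map_ext. intro i.
  simpl. unfold rename_body_flow. simpl. rewrite !(pos_map s q) by lia. reflexivity.
Qed.

Lemma maps_into_Wbar s W q : length q = S (length W) ->
  maps_into s (of_list (Wbar W q)) (of_list (Wbar W (map s q))).
Proof.
  intros Hl f [f0 [Hin [r [Hr ->]]]]. split.
  - assert (Hf0 : headed_flow f0).
    { unfold Wbar in Hin. apply in_concat in Hin as [l [Hl1 Hl2]].
      apply in_map_iff in Hl1 as [i [<- _]].
      destruct Hl2 as [<- | [<- | []]]; split; apply headed_side. }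
    split; apply headed_rename, Hf0.
  - exists (rename_body_flow s f0). split.
    + rewrite <- map_rename_body_Wbar by exact Hl. apply in_map. exact Hin.
    + exists r. split; [exact Hr |]. unfold rename_body_flow. simpl.
      rewrite !rename_body_rename. reflexivity.
Qed.

(** * Observations contain no position constant below the head *)

Lemma in_tensorS A B H f : tensorS A B H -> In f H ->
  exists H1 H2 a b r, A H1 /\ B H2 /\ In a H1 /\ In b H2 /\
    f = (rename r (fst (tensor_flow a b)), rename r (snd (tensor_flow a b))).
Proof.
  intros [ps [Hps Hw]] Hin.
  assert (Hf : of_list H f).
  { exists f. split; [exact Hin |]. exists (fun x => x). split.
    - exists (fun x => x). auto.
    - rewrite !rename_id. destruct f; reflexivity. }
  apply Hw in Hf as [f1 [Hin1 [r [_ ->]]]].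
  apply in_concat in Hin1 as [l [Hl Hf1]]. apply in_map_iff in Hl as [p [<- Hp]].
  apply in_concat in Hf1 as [l [Hl Hf1]].
  apply in_map_iff in Hl as [a [<- Ha]]. apply in_map_iff in Hf1 as [b [<- Hb]].
  destruct (Hps p Hp). exists (fst p), (snd p), a, b, r. auto.
Qed.

Definition pos_free_flow (f : flow) : Prop := ~ usesP (fst f) /\ ~ usesP (snd f).

Definition pos_free_semiring (A : semiring) : Prop :=
  forall H f, A H -> In f H -> pos_free_flow f.

Lemma pos_free_tensorS A B :
  pos_free_semiring A -> pos_free_semiring B -> pos_free_semiring (tensorS A B).
Proof.
  intros HA HB H f HT Hin.
  destruct (in_tensorS A B H f HT Hin) as [H1 [H2 [a [b [r [HA1 [HB2 [Ha [Hb ->]]]]]]]]].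
  destruct (HA H1 a HA1 Ha), (HB H2 b HB2 Hb).
  unfold pos_free_flow, tensor_flow. cbn [fst snd].
  rewrite !usesP_rename. cbn [usesP]. rewrite !usesP_rename. tauto.
Qed.

Lemma pos_free_Obs : pos_free_semiring Obs.
Proof.
  apply pos_free_tensorS.
  - intros H g HC Hg. destruct (HC g Hg) as [[n1 E1] [n2 E2]].
    unfold pos_free_flow. rewrite E1, E2. simpl. tauto.
  - intros H g [_ HR] Hg. apply HR. exact Hg.
Qed.

Definition body_pos_free (t : term) : Prop := exists c r, t = Dot (Cst c) r /\ ~ usesP r.

Lemma body_pos_free_rename r t : body_pos_free t -> body_pos_free (rename r t).
Proof.
  intros [c [b [-> Hb]]]. exists c, (rename r b). rewrite usesP_rename. auto.
Qed.

Lemma body_pos_free_headed t : body_pos_free t -> headed t.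
Proof. intros [c [r [-> _]]]. exists c, r. reflexivity. Qed.

Lemma rename_body_pos_free s t : body_pos_free t -> rename_body s t = t.
Proof. intros [c [r [-> Hr]]]. simpl. rewrite rename_pos_id by exact Hr. reflexivity. Qed.

Lemma Matr_Obs_body_pos_free Sigma O f : Matr Sigma Obs O -> In f O ->
  body_pos_free (fst f) /\ body_pos_free (snd f).
Proof.
  intros HM Hin.
  destruct (in_tensorS _ _ O f HM Hin) as [H1 [H2 [a [b [r [HA1 [HB2 [Ha [Hb ->]]]]]]]]].
  destruct (HA1 a Ha) as [[c1 [E1 _]] [c2 [E2 _]]].
  assert (Hb' : pos_free_flow b).
  { apply (pos_free_tensorS (Csr (fun t => t = Cst CL \/ t = Cst CR)) Obs)
      with H2; [| exact pos_free_Obs | exact HB2 | exact Hb].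
    intros H g HC Hg. destruct (HC g Hg) as [E E'].
    unfold pos_free_flow. destruct E as [-> | ->], E' as [-> | ->]; simpl; tauto. }
  destruct Hb' as [Hb1 Hb2].
  unfold tensor_flow. cbn [fst snd]. rewrite E1, E2.
  split; apply body_pos_free_rename; eexists; eexists;
    (split; [reflexivity | rewrite usesP_rename; assumption]).
Qed.

Lemma maps_into_Matr_Obs Sigma O s : Matr Sigma Obs O -> maps_into s (of_list O) (of_list O).
Proof.
  intros HM f [f0 [Hin [r [Hr ->]]]].
  destruct (Matr_Obs_body_pos_free Sigma O f0 HM Hin) as [G1 G2].
  apply (body_pos_free_rename r) in G1, G2. simpl. split.
  - split; apply body_pos_free_headed; assumption.
  - unfold rename_body_flow. simpl. rewrite !rename_body_pos_free by assumption.
    exists f0. split; [exact Hin |]. exists r. auto.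
Qed.

Lemma nilpotent_Wbar_transport Sigma O W ps ps' : Matr Sigma Obs O ->
  length ps = S (length W) -> length ps' = length ps -> NoDup ps -> NoDup ps' ->
  nilpotent (wprod (of_list O) (of_list (Wbar W ps'))) ->
  nilpotent (wprod (of_list O) (of_list (Wbar W ps))).
Proof.
  intros HM Hl Hl' Hnd Hnd' Hnil.
  pose proof (perm_ofK ps ps') as HK. pose proof (perm_of_invK ps ps') as HK'.
  apply (nilpotent_maps_into _ _ HK HK' _
           (wprod (of_list O) (of_list (Wbar W (map (perm_of ps ps') ps))))).
  - apply (maps_into_wprod _ _ HK HK').
    + apply maps_into_Matr_Obs with Sigma. exact HM.
    + apply maps_into_Wbar. exact Hl.
  - rewrite map_perm_of by congruence. exact Hnil.
Qed.

Theorem mainTheorem10 (Sigma : const -> Prop) (O : wiring) :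
  ~ Sigma Star ->
  Matr Sigma Obs O ->
  forall W : list const,
    inL Sigma O W <->
    (word_over Sigma W /\
     exists ps : list nat, length ps = S (length W) /\ NoDup ps /\
       nilpotent (wprod (of_list O) (of_list (Wbar W ps)))).
Proof.
  intros _ HM W. split.
  - intros [Hw Hall]. split; [exact Hw |].
    exists (seq 0 (S (length W))). rewrite length_seq.
    repeat split; [apply seq_NoDup |]. apply Hall; [apply length_seq | apply seq_NoDup].
  - intros [Hw [ps' [Hl' [Hnd' Hnil]]]]. split; [exact Hw |]. intros ps Hl Hnd.
    apply (nilpotent_Wbar_transport Sigma O W ps ps'); congruence || assumption.
Qed.
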